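(* Let $(\Sigma_+,\Sigma_-,N_1,N_2,N_3)$ be a solution of the Wainwright–Hsu system satisfying the constraint, with $N_1<0$ and $N_2,N_3>0$. Then for every $\epsilon>0$ there is $T$ such that $-N_1(\tau)(N_2+N_3)(\tau)\geq\frac12-\epsilon$ for all $\tau\geq T$.
   Context: Wainwright–Hsu system: for functions $N_1,N_2,N_3,\Sigma_+,\Sigma_-$ of $\tau\in\mathbb{R}$ (prime denotes $d/d\tau$), $N_1'=(q-4\Sigma_+)N_1$, $N_2'=(q+2\Sigma_++2\sqrt3\Sigma_-)N_2$, $N_3'=(q+2\Sigma_+-2\sqrt3\Sigma_-)N_3$, $\Sigma_+'=-(2-q)\Sigma_+-3S_+$, $\Sigma_-'=-(2-q)\Sigma_--3S_-$, where $q=2(\Sigma_+^2+\Sigma_-^2)$, $S_+=\frac12[(N_2-N_3)^2-N_1(2N_1-N_2-N_3)]$, $S_-=\frac{\sqrt3}{2}(N_3-N_2)(N_1-N_2-N_3)$, together with the constraint $\Sigma_+^2+\Sigma_-^2+\frac34[N_1^2+N_2^2+N_3^2-2(N_1N_2+N_2N_3+N_1N_3)]=1$. Solutions with these sign conditions exist for all $\tau\in\mathbb{R}$. *)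

From Stdlib Require Import Reals.
Open Scope R_scope.

Definition WH_q (Sp Sm : R) : R := 2 * (Sp ^ 2 + Sm ^ 2).

Definition WH_Splus (N1 N2 N3 : R) : R :=
  / 2 * ((N2 - N3) ^ 2 - N1 * (2 * N1 - N2 - N3)).

Definition WH_Sminus (N1 N2 N3 : R) : R :=
  sqrt 3 / 2 * (N3 - N2) * (N1 - N2 - N3).

Definition WH_constraint (N1 N2 N3 Sp Sm : R) : Prop :=
  Sp ^ 2 + Sm ^ 2
  + 3 / 4 * (N1 ^ 2 + N2 ^ 2 + N3 ^ 2 - 2 * (N1 * N2 + N2 * N3 + N1 * N3)) = 1.

Definition WH_solution (N1 N2 N3 Sp Sm : R -> R) : Prop :=
  forall t : R,
    let q := WH_q (Sp t) (Sm t) in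
    derivable_pt_lim N1 t ((q - 4 * Sp t) * N1 t) /\
    derivable_pt_lim N2 t ((q + 2 * Sp t + 2 * sqrt 3 * Sm t) * N2 t) /\
    derivable_pt_lim N3 t ((q + 2 * Sp t - 2 * sqrt 3 * Sm t) * N3 t) /\
    derivable_pt_lim Sp t (- (2 - q) * Sp t - 3 * WH_Splus (N1 t) (N2 t) (N3 t)) /\
    derivable_pt_lim Sm t (- (2 - q) * Sm t - 3 * WH_Sminus (N1 t) (N2 t) (N3 t)) /\
    WH_constraint (N1 t) (N2 t) (N3 t) (Sp t) (Sm t).

From Stdlib Require Import Reals Lra Psatz Classical.
Open Scope R_scope.

(* Write m = -N1, n = N2 + N3, d = N2 - N3, so that the constraint reads
   Σ+^2 + Σ-^2 + 3/4 (m^2 + d^2 + 2 m n) = 1 with |d| < n.  The product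
   P = m N2 N3 satisfies P' = 6 (Σ+^2 + Σ-^2) P, so it is nondecreasing, and
   P <= n/6.  P is unbounded: otherwise n >= 6 P(0) > 0 for t >= 0, and then
   Σ+ - √3 W + (c/6) ln P, with W = Σ- d / (m + n), would be bounded above
   while its derivative is at least 1/2.  Hence n -> +oo.  For large n the
   function L = ln (m n) - W/√3 has L' >= 3/2 - 3 m n - o(1) and W/√3 = o(1),
   so L grows at a definite rate as long as m n stays below 1/2 - eps/2; thus L
   eventually stays above ln (1/2 - eps/2) - o(1), which gives the bound. *)

Lemma Rabs_le_inv (x a : R) : Rabs x <= a -> - a <= x <= a.
Proof. pose proof (Rle_abs x); pose proof (Rle_abs (- x)); rewrite Rabs_Ropp in *; lra. Qed.

Lemma Rdiv_unit_interval (a b : R) : 0 <= a <= b -> 0 < b -> 0 <= a / b <= 1.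
Proof.
  intros Hab Hb; split.
  - apply Rmult_le_pos; [lra | left; apply Rinv_0_lt_compat; lra].
  - apply Rmult_le_reg_r with b; [lra | field_simplify; lra].
Qed.

Lemma ln_le_ln (x y : R) : 0 < x -> x <= y -> ln x <= ln y.
Proof.
  intros Hx Hxy; destruct (Rle_lt_or_eq_dec x y Hxy) as [Hlt | ->]; [|lra].
  now left; apply ln_increasing.
Qed.

Lemma sqrt3_facts : sqrt 3 * sqrt 3 = 3 /\ 0 < sqrt 3 /\ sqrt 3 <= 2.
Proof.
  assert (H3 : sqrt 3 * sqrt 3 = 3) by (apply sqrt_sqrt; lra).
  assert (Hpos : 0 < sqrt 3) by (apply sqrt_lt_R0; lra).
  repeat split; [exact H3 | exact Hpos | nra].
Qed.

Lemma derivable_pt_lim_eq_val (f : R -> R) (x l l' : R) :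
  derivable_pt_lim f x l -> l = l' -> derivable_pt_lim f x l'.
Proof. now intros Hf <-. Qed.

Lemma derivable_pt_lim_ln_comp (f : R -> R) (x l : R) :
  derivable_pt_lim f x l -> 0 < f x -> derivable_pt_lim (fun y => ln (f y)) x (l / f x).
Proof.
  intros Hf Hpos; apply derivable_pt_lim_eq_val with (/ f x * l); [|unfold Rdiv; ring].
  exact (derivable_pt_lim_comp f ln x l (/ f x) Hf (derivable_pt_lim_ln _ Hpos)).
Qed.

Lemma deriv_ge_increment (f f' : R -> R) (a b c : R) :
  a <= b ->
  (forall x, a <= x <= b -> derivable_pt_lim f x (f' x)) ->
  (forall x, a <= x <= b -> c <= f' x) ->
  c * (b - a) <= f b - f a.
Proof.
  intros Hab Hf Hc; destruct (Rle_lt_or_eq_dec a b Hab) as [Hlt | ->]; [|lra].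
  destruct (MVT_cor2 f f' a b Hlt Hf) as [x [-> Hx]].
  apply Rmult_le_compat_r; [lra | apply Hc; lra].
Qed.

Lemma deriv_pos_left_lt (f : R -> R) (x l : R) :
  derivable_pt_lim f x l -> 0 < l ->
  exists delta, 0 < delta /\ forall y, x - delta < y < x -> f y < f x.
Proof.
  intros Hf Hl; destruct (Hf l Hl) as [[delta Hdelta] Hclose].
  exists delta; split; [exact Hdelta|]; intros y Hy.
  assert (Hh : y - x <> 0) by lra.
  specialize (Hclose (y - x) Hh ltac:(rewrite Rabs_left; simpl; lra)).
  replace (x + (y - x)) with y in Hclose by ring.
  apply Rabs_def2 in Hclose; destruct Hclose as [_ Hq].
  assert (Hpos : 0 < (f y - f x) / (y - x)) by lra.
  assert (Hneg : (f y - f x) / (y - x) * (y - x) < 0)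
    by (apply Rmult_pos_neg; lra).
  replace ((f y - f x) / (y - x) * (y - x)) with (f y - f x) in Hneg by (field; lra).
  lra.
Qed.

Lemma eventually_ge_of_deriv_ge_below (f f' : R -> R) (T0 lam e : R) :
  (forall x, derivable_pt_lim f x (f' x)) -> 0 < e ->
  (forall x, T0 <= x -> f x <= lam -> e <= f' x) ->
  exists T, forall t, T <= t -> lam <= f t.
Proof.
  intros Hf He Hbelow.
  set (D := (Rabs (lam - f T0) + 1) / e).
  assert (HD : 0 < D) by (apply Rdiv_lt_0_compat; [pose proof (Rabs_pos (lam - f T0))|]; lra).
  assert (Hcross : exists T1, T0 <= T1 /\ lam < f T1).
  { apply NNPP; intros Hnone.
    assert (Hall : forall x, T0 <= x <= T0 + D -> e <= f' x).
    { intros x Hx; apply Hbelow; [lra|].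
      apply Rnot_lt_le; intros Hlt; apply Hnone; exists x; split; [lra | exact Hlt]. }
    pose proof (deriv_ge_increment f f' T0 (T0 + D) e ltac:(lra) (fun x _ => Hf x) Hall).
    assert (Hstep : e * (T0 + D - T0) = Rabs (lam - f T0) + 1) by (unfold D; field; lra).
    assert (f (T0 + D) <= lam)
      by (apply Rnot_lt_le; intros Hlt; apply Hnone; exists (T0 + D); split; [lra | exact Hlt]).
    pose proof (Rle_abs (lam - f T0)); lra. }
  destruct Hcross as [T1 [HT1 Hlam1]]; exists T1; intros t Ht.
  (* A minimum of [f] on [[T1, t]] below [lam] has [f' > 0], so [f] is smaller just to its left. *)
  apply Rnot_lt_le; intros Hlt.
  assert (Hcont : forall x, continuity_pt f x)
    by (intros x; apply derivable_continuous_pt; exists (f' x); apply Hf).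
  destruct (continuity_ab_min f T1 t Ht (fun x _ => Hcont x)) as [u [Hmin Hu]].
  assert (Hfu : f u <= f t) by (apply Hmin; lra).
  assert (HT1u : T1 < u)
    by (destruct (Rle_lt_or_eq_dec _ _ (proj1 Hu)) as [|<-]; lra).
  destruct (deriv_pos_left_lt f u (f' u) (Hf u) ltac:(pose proof (Hbelow u); lra))
    as [delta [Hdelta Hleft]].
  set (y := Rmax T1 (u - delta / 2)).
  assert (Hy : T1 <= y /\ u - delta < y < u) by (unfold y, Rmax; destruct Rle_dec; lra).
  pose proof (Hleft y (proj2 Hy)); pose proof (Hmin y ltac:(lra)); lra.
Qed.

(* In the variables m = -N1, n = N2 + N3, d = N2 - N3: the quantity W and the
   right-hand sides of W', Σ+' and (ln (m n))' along the flow. *)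
Definition WH_W (m n d Sm : R) : R := Sm * d / (m + n).

Definition WH_Wdot (m n d Sp Sm : R) : R :=
  (2 * (Sp ^ 2 + Sm ^ 2) - 2) * WH_W m n d Sm - 3 * sqrt 3 / 2 * d ^ 2
  + 2 * sqrt 3 * Sm ^ 2 * n / (m + n) + 6 * Sp * m * WH_W m n d Sm / (m + n)
  - 2 * sqrt 3 * WH_W m n d Sm ^ 2.

Definition WH_Spdot (m n d Sp Sm : R) : R :=
  - (2 - 2 * (Sp ^ 2 + Sm ^ 2)) * Sp - 3 / 2 * (d ^ 2 - 2 * m ^ 2 - m * n).

Definition WH_ln_mn_dot (n d Sp Sm : R) : R :=
  4 * (Sp ^ 2 + Sm ^ 2) - 2 * Sp + 2 * sqrt 3 * Sm * d / n.

Section ConstraintEstimates.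

Variables m n d Sp Sm : R.
Hypothesis Hm : 0 < m.
Hypothesis Hd : Rabs d < n.
Hypothesis Hc : Sp ^ 2 + Sm ^ 2 + 3 / 4 * (m ^ 2 + d ^ 2 + 2 * m * n) = 1.

Lemma constraint_bounds :
  0 < n /\ 0 <= Sp ^ 2 + Sm ^ 2 <= 1 /\ Rabs Sp <= 1 /\ Rabs Sm <= 1 /\
  0 < m * n <= 2 / 3.
Proof.
  pose proof (Rabs_pos d); pose proof (pow2_ge_0 Sp); pose proof (pow2_ge_0 Sm).
  pose proof (pow2_ge_0 m); pose proof (pow2_ge_0 d).
  assert (Hn : 0 < n) by lra.
  assert (Hmn : 0 < m * n) by nra.
  repeat split; try lra; try nra; apply Rabs_le; nra.
Qed.

Lemma abs_WH_W_mul (k : R) :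
  0 <= k <= m + n -> Rabs (WH_W m n d Sm) * k <= Rabs Sm * Rabs d.
Proof.
  intros Hk; destruct constraint_bounds as [Hn _].
  unfold WH_W, Rdiv; rewrite !Rabs_mult, Rabs_inv, (Rabs_right (m + n)) by lra.
  pose proof (Rabs_pos Sm); pose proof (Rabs_pos d).
  replace (Rabs Sm * Rabs d * / (m + n) * k) with (Rabs Sm * Rabs d * (k / (m + n)))
    by (field; lra).
  destruct (Rdiv_unit_interval k (m + n) ltac:(lra) ltac:(lra)).
  rewrite <- (Rmult_1_r (Rabs Sm * Rabs d)) at 2.
  apply Rmult_le_compat_l; [apply Rmult_le_pos|]; assumption.
Qed.

Lemma abs_WH_W_le : Rabs (WH_W m n d Sm) <= Rabs Sm.
Proof.
  destruct constraint_bounds as [Hn _].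
  pose proof (abs_WH_W_mul (m + n) ltac:(lra)); pose proof (Rabs_pos Sm).
  assert (Rabs Sm * Rabs d <= Rabs Sm * (m + n)) by (apply Rmult_le_compat_l; lra).
  nra.
Qed.

(* AM-GM applied to the summands [Σ-^2] and [3/4 d^2] of the constraint. *)
Lemma sqrt3_abs_Sm_d_le : sqrt 3 * Rabs (Sm * d) <= 1.
Proof.
  destruct sqrt3_facts as [H3 [Hs _]].
  pose proof (pow2_ge_0 Sp); pose proof (pow2_ge_0 m).
  destruct constraint_bounds as [_ [_ [_ [_ [Hmn _]]]]].
  pose proof (pow2_ge_0 (Rabs Sm - sqrt 3 / 2 * Rabs d)).
  rewrite Rabs_mult; rewrite <- (pow2_abs Sm), <- (pow2_abs d) in Hc; nra.
Qed.

Lemma WH_Spdot_ge :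
  1 / 2 - 5 * (Sp ^ 2 + Sm ^ 2) - 9 / 4 * d ^ 2 <= WH_Spdot m n d Sp Sm.
Proof.
  destruct constraint_bounds as [Hn [[HS0 HS1] [HSp _]]].
  apply Rabs_le_inv in HSp.
  pose proof (pow2_ge_0 m); pose proof (pow2_ge_0 (2 * Sp - 1 / 2)).
  assert (0 <= (Sp + 1) * (Sp ^ 2 + Sm ^ 2)) by (apply Rmult_le_pos; lra).
  unfold WH_Spdot; nra.
Qed.

Lemma WH_Wdot_le :
  WH_Wdot m n d Sp Sm <=
  2 * Rabs (WH_W m n d Sm) - 3 * sqrt 3 / 2 * d ^ 2 + (2 * sqrt 3 + 3) * (Sp ^ 2 + Sm ^ 2).
Proof.
  destruct sqrt3_facts as [_ [Hs _]].
  destruct constraint_bounds as [Hn [[HS0 HS1] _]].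
  pose proof abs_WH_W_le as HwSm; set (w := WH_W m n d Sm) in *.
  pose proof (Rdiv_unit_interval n (m + n) ltac:(lra) ltac:(lra)) as Hnk.
  pose proof (Rdiv_unit_interval m (m + n) ltac:(lra) ltac:(lra)) as Hmk.
  assert (Hlin : (2 * (Sp ^ 2 + Sm ^ 2) - 2) * w <= 2 * Rabs w).
  { pose proof (Rabs_le_inv w (Rabs w) (Rle_refl _)); nra. }
  assert (Hcross : 6 * (m / (m + n)) * (Sp * w) <= 3 * (Sp ^ 2 + Sm ^ 2)).
  { assert (HSpw : Sp * w <= Rabs Sp * Rabs Sm).
    { apply Rle_trans with (Rabs (Sp * w)); [apply Rle_abs|].
      rewrite Rabs_mult; apply Rmult_le_compat_l; [apply Rabs_pos | exact HwSm]. }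
    pose proof (pow2_ge_0 (Rabs Sp - Rabs Sm)); rewrite <- (pow2_abs Sp), <- (pow2_abs Sm).
    rewrite <- (pow2_abs Sp), <- (pow2_abs Sm) in HS0; nra. }
  assert (0 <= 2 * sqrt 3 * Sm ^ 2 * (1 - n / (m + n)))
    by (apply Rmult_le_pos; [pose proof (pow2_ge_0 Sm); nra | lra]).
  pose proof (pow2_ge_0 Sp); pose proof (pow2_ge_0 w).
  assert (0 <= 2 * sqrt 3 * w ^ 2) by nra.
  unfold WH_Wdot; fold w.
  replace (2 * sqrt 3 * Sm ^ 2 * n / (m + n)) with (2 * sqrt 3 * Sm ^ 2 * (n / (m + n)))
    by (field; lra).
  replace (6 * Sp * m * w / (m + n)) with (6 * (m / (m + n)) * (Sp * w)) by (field; lra).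
  nra.
Qed.

Lemma WH_lyapunov_dot_ge (k0 : R) :
  0 < k0 <= n ->
  1 / 2 <= WH_Spdot m n d Sp Sm - sqrt 3 * WH_Wdot m n d Sp Sm
           + (17 + 3 / k0 ^ 2) * (Sp ^ 2 + Sm ^ 2).
Proof.
  intros Hk0; destruct sqrt3_facts as [H3 [Hs Hs2]].
  destruct constraint_bounds as [Hn [[HS0 HS1] _]].
  pose proof WH_Spdot_ge; pose proof WH_Wdot_le.
  set (y := Rabs Sm / k0).
  assert (Hw : Rabs (WH_W m n d Sm) <= y * Rabs d).
  { apply Rmult_le_reg_r with k0; [lra|].
    replace (y * Rabs d * k0) with (Rabs Sm * Rabs d) by (unfold y; field; lra).
    apply abs_WH_W_mul; lra. }
  assert (Hy : 3 * y ^ 2 <= 3 / k0 ^ 2 * (Sp ^ 2 + Sm ^ 2)).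
  { replace (3 * y ^ 2) with (3 / k0 ^ 2 * Sm ^ 2)
      by (unfold y; rewrite <- (pow2_abs Sm); field; lra).
    apply Rmult_le_compat_l; [left; apply Rdiv_lt_0_compat; nra|]; pose proof (pow2_ge_0 Sp); lra. }
  (* [2 √3 y |d| <= d^2 + 3 y^2] *)
  pose proof (pow2_ge_0 (Rabs d - sqrt 3 * y)); rewrite <- (pow2_abs d) in *.
  pose proof (Rabs_pos d).
  assert (0 <= y) by (apply Rmult_le_pos; [apply Rabs_pos | left; apply Rinv_0_lt_compat; lra]).
  nra.
Qed.

Lemma abs_WH_W_div_sqrt3_le : Rabs (WH_W m n d Sm) / sqrt 3 <= 1 / (3 * n).
Proof.
  destruct sqrt3_facts as [H3 [Hs _]]; destruct constraint_bounds as [Hn _].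
  pose proof (abs_WH_W_mul n ltac:(lra)); pose proof sqrt3_abs_Sm_d_le.
  rewrite Rabs_mult in *; pose proof (Rabs_pos (WH_W m n d Sm)).
  apply Rmult_le_reg_r with (3 * n * sqrt 3); [nra|].
  replace (1 / (3 * n) * (3 * n * sqrt 3)) with (sqrt 3) by (field; lra).
  replace (Rabs (WH_W m n d Sm) / sqrt 3 * (3 * n * sqrt 3))
    with (3 * (Rabs (WH_W m n d Sm) * n)) by (field; lra).
  nra.
Qed.

Lemma WH_ln_mn_dot_sub_Wdot_ge :
  1 <= n -> 3 / 2 - 3 * (m * n) - 6 / n <= WH_ln_mn_dot n d Sp Sm - WH_Wdot m n d Sp Sm / sqrt 3.
Proof.
  intros Hn1; destruct sqrt3_facts as [H3 [Hs _]].
  destruct constraint_bounds as [Hn [[HS0 HS1] [HSp [_ [Hmn0 Hmn]]]]].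
  pose proof abs_WH_W_div_sqrt3_le as Hu; pose proof sqrt3_abs_Sm_d_le as HSmd.
  pose proof (Rdiv_unit_interval n (m + n) ltac:(lra) ltac:(lra)) as Hnk.
  pose proof (Rdiv_unit_interval m (m + n) ltac:(lra) ltac:(lra)) as Hmk.
  set (w := WH_W m n d Sm) in *; set (a := 1 / (3 * n)) in *.
  assert (Ha : 0 < a) by (apply Rdiv_lt_0_compat; lra).
  assert (Hu' : Rabs (w / sqrt 3) <= a)
    by (unfold Rdiv; rewrite Rabs_mult, Rabs_inv, (Rabs_right (sqrt 3)) by lra; exact Hu).
  pose proof (Rabs_le_inv _ _ Hu') as Hu_bounds.
  assert (Emain : WH_ln_mn_dot n d Sp Sm - WH_Wdot m n d Sp Sm / sqrt 3 =
     (4 * (Sp ^ 2 + Sm ^ 2) - 2 * Sp + 3 / 2 * d ^ 2 - 2 * Sm ^ 2 * (n / (m + n)))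
     + 2 * sqrt 3 * (Sm * d) / n - (2 * (Sp ^ 2 + Sm ^ 2) - 2) * (w / sqrt 3)
     - 6 * (m / (m + n)) * (Sp * (w / sqrt 3)) + 2 * w ^ 2).
  { unfold WH_ln_mn_dot, WH_Wdot; fold w; field; lra. }
  assert (Hmain : 3 / 2 - 3 * (m * n) - 3 / 2 * m ^ 2 <=
     4 * (Sp ^ 2 + Sm ^ 2) - 2 * Sp + 3 / 2 * d ^ 2 - 2 * Sm ^ 2 * (n / (m + n))).
  { pose proof (pow2_ge_0 (Sp - 1 / 2)); pose proof (pow2_ge_0 Sm); nra. }
  assert (Hm2 : 3 / 2 * m ^ 2 <= 2 * a).
  { assert (m * (m * n) <= 4 / 9) by nra.
    unfold a; apply Rmult_le_reg_r with (3 * n); [lra|]; field_simplify; nra. }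
  assert (HSmd' : - 2 * (3 * a) <= 2 * sqrt 3 * (Sm * d) / n).
  { unfold a; apply Rmult_le_reg_r with n; [lra|]; field_simplify; try lra.
    pose proof (Rle_abs (- (Sm * d))); rewrite Rabs_Ropp in *; nra. }
  assert (Hlin : - (2 * (Sp ^ 2 + Sm ^ 2) - 2) * (w / sqrt 3) >= - 2 * a) by nra.
  assert (Hcross : - 6 * (m / (m + n)) * (Sp * (w / sqrt 3)) >= - 6 * a).
  { assert (HSpu : Rabs (Sp * (w / sqrt 3)) <= a)
      by (rewrite Rabs_mult; pose proof (Rabs_pos (w / sqrt 3)); pose proof (Rabs_pos Sp); nra).
    apply Rabs_le_inv in HSpu; nra. }
  pose proof (pow2_ge_0 w).
  assert (6 / n = 18 * a) by (unfold a; field; lra).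
  lra.
Qed.

End ConstraintEstimates.

Section Solution.

Variables N1 N2 N3 Sp Sm : R -> R.
Hypothesis Hsol : WH_solution N1 N2 N3 Sp Sm.
Hypothesis Hsign : forall t, N1 t < 0 /\ 0 < N2 t /\ 0 < N3 t.

Let m (t : R) : R := - N1 t.
Let n (t : R) : R := N2 t + N3 t.
Let d (t : R) : R := N2 t - N3 t.
Let P (t : R) : R := m t * (N2 t * N3 t).
Let W (t : R) : R := WH_W (m t) (n t) (d t) (Sm t).
Let q (t : R) : R := WH_q (Sp t) (Sm t).

Lemma phase_point (t : R) :
  0 < m t /\ Rabs (d t) < n t /\
  Sp t ^ 2 + Sm t ^ 2 + 3 / 4 * (m t ^ 2 + d t ^ 2 + 2 * m t * n t) = 1.
Proof.
  destruct (Hsign t) as [H1 [H2 H3]]; destruct (Hsol t) as [_ [_ [_ [_ [_ Hc]]]]].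
  unfold WH_constraint in Hc; unfold m, n, d.
  repeat split; [lra | apply Rabs_def1; lra | rewrite <- Hc; ring].
Qed.

Lemma derivable_m (t : R) : derivable_pt_lim m t ((q t - 4 * Sp t) * m t).
Proof.
  apply derivable_pt_lim_eq_val with (- ((q t - 4 * Sp t) * N1 t)); [|unfold m; ring].
  apply (derivable_pt_lim_opp N1), Hsol.
Qed.

Lemma derivable_n (t : R) :
  derivable_pt_lim n t ((q t + 2 * Sp t) * n t + 2 * sqrt 3 * Sm t * d t).
Proof.
  destruct (Hsol t) as [_ [H2 [H3 _]]].
  eapply derivable_pt_lim_eq_val; [apply (derivable_pt_lim_plus N2 N3); eassumption|].
  unfold n, d, q; ring.
Qed.

Lemma derivable_d (t : R) :
  derivable_pt_lim d t ((q t + 2 * Sp t) * d t + 2 * sqrt 3 * Sm t * n t).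
Proof.
  destruct (Hsol t) as [_ [H2 [H3 _]]].
  eapply derivable_pt_lim_eq_val; [apply (derivable_pt_lim_minus N2 N3); eassumption|].
  unfold n, d, q; ring.
Qed.

Lemma derivable_Sp (t : R) :
  derivable_pt_lim Sp t (WH_Spdot (m t) (n t) (d t) (Sp t) (Sm t)).
Proof.
  destruct (Hsol t) as [_ [_ [_ [H4 _]]]].
  eapply derivable_pt_lim_eq_val; [exact H4|].
  unfold WH_Spdot, WH_q, WH_Splus, m, n, d; field.
Qed.

Lemma derivable_Sm (t : R) :
  derivable_pt_lim Sm t ((q t - 2) * Sm t - 3 * sqrt 3 / 2 * d t * (m t + n t)).
Proof.
  destruct (Hsol t) as [_ [_ [_ [_ [H5 _]]]]].
  eapply derivable_pt_lim_eq_val; [exact H5|].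
  unfold WH_Sminus, q, m, n, d; field.
Qed.

Lemma derivable_P (t : R) : derivable_pt_lim P t (6 * (Sp t ^ 2 + Sm t ^ 2) * P t).
Proof.
  destruct (Hsol t) as [_ [H2 [H3 _]]].
  eapply derivable_pt_lim_eq_val.
  - apply (derivable_pt_lim_mult m (fun x => N2 x * N3 x));
      [apply derivable_m | apply (derivable_pt_lim_mult N2 N3); eassumption].
  - unfold P, q, WH_q; ring.
Qed.

Lemma derivable_W (t : R) :
  derivable_pt_lim W t (WH_Wdot (m t) (n t) (d t) (Sp t) (Sm t)).
Proof.
  destruct (phase_point t) as [Hm [Hd _]]; pose proof (Rabs_pos (d t)).
  eapply derivable_pt_lim_eq_val.
  - apply (derivable_pt_lim_div (fun x => Sm x * d x) (fun x => m x + n x)).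
    + apply (derivable_pt_lim_mult Sm d); [apply derivable_Sm | apply derivable_d].
    + apply (derivable_pt_lim_plus m n); [apply derivable_m | apply derivable_n].
    + lra.
  - unfold WH_Wdot, WH_W, q, WH_q, Rsqr; field; lra.
Qed.

Lemma derivable_ln_mn (t : R) :
  derivable_pt_lim (fun x => ln (m x * n x)) t (WH_ln_mn_dot (n t) (d t) (Sp t) (Sm t)).
Proof.
  destruct (phase_point t) as [Hm [Hd _]]; pose proof (Rabs_pos (d t)).
  eapply derivable_pt_lim_eq_val.
  - apply (derivable_pt_lim_ln_comp (fun x => m x * n x)); [|nra].
    apply (derivable_pt_lim_mult m n); [apply derivable_m | apply derivable_n].
  - unfold WH_ln_mn_dot, q, WH_q; field; lra.
Qed.

Lemma P_pos (t : R) : 0 < P t.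
Proof.
  destruct (Hsign t) as [H1 [H2 H3]]; unfold P, m.
  apply Rmult_lt_0_compat; [lra | nra].
Qed.

Lemma derivable_ln_P (t : R) :
  derivable_pt_lim (fun x => ln (P x)) t (6 * (Sp t ^ 2 + Sm t ^ 2)).
Proof.
  pose proof (P_pos t).
  eapply derivable_pt_lim_eq_val;
    [apply (derivable_pt_lim_ln_comp P); [apply derivable_P | assumption]|].
  field; lra.
Qed.

Lemma P_nondecreasing (a b : R) : a <= b -> P a <= P b.
Proof.
  intros Hab.
  enough (0 * (b - a) <= P b - P a) by lra.
  apply (deriv_ge_increment P (fun x => 6 * (Sp x ^ 2 + Sm x ^ 2) * P x));
    [exact Hab | intros x _; apply derivable_P|].
  intros x _; pose proof (P_pos x); pose proof (pow2_ge_0 (Sp x)); pose proof (pow2_ge_0 (Sm x)).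
  apply Rmult_le_pos; lra.
Qed.

Lemma six_P_le_n (t : R) : 6 * P t <= n t.
Proof.
  destruct (phase_point t) as [Hm [Hd Hc]].
  destruct (constraint_bounds _ _ _ _ _ Hm Hd Hc) as [Hn [_ [_ [_ [_ Hmn]]]]].
  assert (HN : 4 * (N2 t * N3 t) <= n t ^ 2)
    by (pose proof (pow2_ge_0 (d t)); unfold n, d in *; nra).
  unfold P; nra.
Qed.

Lemma derivable_lyapunov (c t : R) :
  derivable_pt_lim (fun x => Sp x - sqrt 3 * W x + c / 6 * ln (P x)) t
    (WH_Spdot (m t) (n t) (d t) (Sp t) (Sm t)
     - sqrt 3 * WH_Wdot (m t) (n t) (d t) (Sp t) (Sm t) + c * (Sp t ^ 2 + Sm t ^ 2)).
Proof.
  eapply derivable_pt_lim_eq_val.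
  - apply (derivable_pt_lim_plus (fun y => Sp y - sqrt 3 * W y)).
    + apply (derivable_pt_lim_minus Sp); [apply derivable_Sp|].
      apply (derivable_pt_lim_mult (fun _ => sqrt 3) W);
        [apply derivable_pt_lim_const | apply derivable_W].
    + apply (derivable_pt_lim_mult (fun _ => c / 6) (fun y => ln (P y)));
        [apply derivable_pt_lim_const | apply derivable_ln_P].
  - field.
Qed.

Lemma P_unbounded (K : R) : exists t, K < P t.
Proof.
  apply NNPP; intros Hnone.
  assert (HK : forall t, P t <= K)
    by (intros t; apply Rnot_lt_le; intros Hlt; apply Hnone; exists t; exact Hlt).
  destruct sqrt3_facts as [_ [Hs Hs2]].
  set (k0 := 6 * P 0); pose proof (P_pos 0) as HP0.
  set (c := 17 + 3 / k0 ^ 2).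
  assert (Hc : 0 <= c)
    by (unfold c; assert (0 < 3 / k0 ^ 2) by (apply Rdiv_lt_0_compat; unfold k0; nra); lra).
  set (F := fun x => Sp x - sqrt 3 * W x + c / 6 * ln (P x)).
  assert (HF' : forall x, 0 <= x ->
    1 / 2 <= WH_Spdot (m x) (n x) (d x) (Sp x) (Sm x)
             - sqrt 3 * WH_Wdot (m x) (n x) (d x) (Sp x) (Sm x) + c * (Sp x ^ 2 + Sm x ^ 2)).
  { intros x Hx; destruct (phase_point x) as [Hm [Hd Hcx]].
    pose proof (P_nondecreasing 0 x Hx); pose proof (six_P_le_n x).
    apply WH_lyapunov_dot_ge; auto; unfold k0; lra. }
  assert (HFK : forall x, F x <= 3 + c / 6 * ln K).
  { intros x; destruct (phase_point x) as [Hm [Hd Hcx]].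
    destruct (constraint_bounds _ _ _ _ _ Hm Hd Hcx) as [_ [_ [HSp [HSm _]]]].
    pose proof (abs_WH_W_le _ _ _ _ _ Hm Hd Hcx); fold (W x) in *.
    pose proof (Rle_abs (Sp x)); pose proof (Rle_abs (- W x)); rewrite Rabs_Ropp in *.
    assert (ln (P x) <= ln K) by (apply ln_le_ln; [apply P_pos | apply HK]).
    assert (c / 6 * ln (P x) <= c / 6 * ln K) by (apply Rmult_le_compat_l; lra).
    unfold F; nra. }
  set (T := 2 * (Rabs (3 + c / 6 * ln K - F 0) + 1)).
  assert (HT : 0 <= T) by (unfold T; pose proof (Rabs_pos (3 + c / 6 * ln K - F 0)); lra).
  pose proof (deriv_ge_increment F _ 0 T (1 / 2) HT
    (fun x _ => derivable_lyapunov c x) (fun x Hx => HF' x (proj1 Hx))).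
  pose proof (HFK T); pose proof (Rle_abs (3 + c / 6 * ln K - F 0)); unfold T in *; lra.
Qed.

Lemma n_eventually_ge (M : R) : exists T, forall t, T <= t -> M <= n t.
Proof.
  destruct (P_unbounded (M / 6)) as [T HT]; exists T; intros t Ht.
  pose proof (P_nondecreasing T t Ht); pose proof (six_P_le_n t); lra.
Qed.

Lemma ln_mn_dot_eventually_ge (eta : R) :
  0 < eta -> exists T, forall t, T <= t ->
    3 / 2 - 3 * (m t * n t) - eta <=
      WH_ln_mn_dot (n t) (d t) (Sp t) (Sm t) - WH_Wdot (m t) (n t) (d t) (Sp t) (Sm t) / sqrt 3
    /\ Rabs (W t) / sqrt 3 <= eta.
Proof.
  intros Heta; destruct (n_eventually_ge (6 / eta + 1)) as [T HT]; exists T; intros t Ht.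
  destruct (phase_point t) as [Hm [Hd Hc]]; specialize (HT t Ht).
  assert (H6 : 0 < 6 / eta) by (apply Rdiv_lt_0_compat; lra).
  assert (Hn : 6 / n t <= eta).
  { apply Rmult_le_reg_r with (n t); [lra|].
    replace (6 / n t * n t) with 6 by (field; lra).
    replace 6 with (eta * (6 / eta)) at 1 by (field; lra).
    apply Rmult_le_compat_l; lra. }
  assert (1 / (3 * n t) <= 6 / n t)
    by (apply Rmult_le_reg_r with (3 * n t); [lra|]; field_simplify; lra).
  pose proof (WH_ln_mn_dot_sub_Wdot_ge _ _ _ _ _ Hm Hd Hc ltac:(lra)).
  pose proof (abs_WH_W_div_sqrt3_le _ _ _ _ _ Hm Hd Hc); fold (W t) in *.
  split; lra.
Qed.

Lemma mn_eventually_ge (eps : R) :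
  0 < eps <= 1 / 4 -> exists T, forall t, T <= t -> 1 / 2 - eps <= m t * n t.
Proof.
  intros Heps; destruct sqrt3_facts as [_ [Hs _]].
  set (eta := eps / 4); set (c0 := 1 / 2 - eps / 2); set (lam := ln c0 - eta).
  assert (Hc0 : 0 < c0) by (unfold c0; lra).
  destruct (ln_mn_dot_eventually_ge eta ltac:(unfold eta; lra)) as [T0 HT0].
  set (L := fun x => ln (m x * n x) - W x / sqrt 3).
  set (L' := fun x => WH_ln_mn_dot (n x) (d x) (Sp x) (Sm x)
                      - WH_Wdot (m x) (n x) (d x) (Sp x) (Sm x) / sqrt 3).
  assert (HL : forall x, derivable_pt_lim L x (L' x)).
  { intros x; apply (derivable_pt_lim_minus (fun y => ln (m y * n y))); [apply derivable_ln_mn|].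
    eapply derivable_pt_lim_eq_val.
    - apply (derivable_pt_lim_div W (fun _ => sqrt 3));
        [apply derivable_W | apply derivable_pt_lim_const | lra].
    - unfold Rsqr; field; lra. }
  assert (Hmn_pos : forall x, 0 < m x * n x).
  { intros x; destruct (phase_point x) as [Hm [Hd _]]; pose proof (Rabs_pos (d x)); nra. }
  assert (HW : forall x, T0 <= x -> - eta <= W x / sqrt 3 <= eta).
  { intros x Hx; apply Rabs_le_inv; unfold Rdiv.
    rewrite Rabs_mult, Rabs_inv, (Rabs_right (sqrt 3)) by lra; apply HT0, Hx. }
  assert (Hbelow : forall x, T0 <= x -> L x <= lam -> eps <= L' x).
  { intros x Hx HLx; destruct (HT0 x Hx) as [HL' _]; pose proof (HW x Hx).
    assert (m x * n x <= c0).
    { apply Rnot_lt_le; intros Hlt; pose proof (ln_increasing _ _ Hc0 Hlt).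
      unfold L, lam in HLx; lra. }
    unfold L', c0, eta in *; lra. }
  destruct (eventually_ge_of_deriv_ge_below L L' T0 lam eps HL ltac:(lra) Hbelow) as [T1 HT1].
  exists (Rmax T0 T1); intros t Ht.
  pose proof (Rmax_l T0 T1); pose proof (Rmax_r T0 T1).
  specialize (HT1 t ltac:(lra)); pose proof (HW t ltac:(lra)).
  assert (Hln : ln c0 - 2 * eta <= ln (m t * n t)) by (unfold L, lam in HT1; lra).
  assert (Hexp : c0 * exp (- (2 * eta)) <= m t * n t).
  { apply Rnot_lt_le; intros Hlt; pose proof (ln_increasing _ _ (Hmn_pos t) Hlt) as Hlt'.
    rewrite (ln_mult c0), ln_exp in Hlt' by (try apply exp_pos; lra); lra. }
  pose proof (exp_ineq1_le (- (2 * eta))).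
  assert (c0 * (1 + - (2 * eta)) <= c0 * exp (- (2 * eta))) by (apply Rmult_le_compat_l; lra).
  unfold c0, eta in *; nra.
Qed.

End Solution.

Theorem mainTheorem16 (N1 N2 N3 Sp Sm : R -> R) :
  WH_solution N1 N2 N3 Sp Sm ->
  (forall t : R, N1 t < 0 /\ 0 < N2 t /\ 0 < N3 t) ->
  forall eps : R, 0 < eps ->
  exists T : R, forall t : R, T <= t ->
    - N1 t * (N2 t + N3 t) >= / 2 - eps.
Proof.
  intros Hsol Hsign eps Heps.
  destruct (mn_eventually_ge N1 N2 N3 Sp Sm Hsol Hsign (Rmin eps (1 / 4)))
    as [T HT]; [split; [apply Rmin_glb_lt | apply Rmin_r]; lra|].
  exists T; intros t Ht; specialize (HT t Ht); simpl in HT.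
  pose proof (Rmin_l eps (1 / 4)); lra.
Qed.
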